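(* There exists a function $g:\mathbb{R}_+\to\mathbb{R}$ with $\lim_{\varepsilon\to0^+}g(\varepsilon)=0$ such that, if $0<\varepsilon<\varepsilon^*$ and $R\in\mathbb{N}$ with $R\ge R_{\overline{\mathbb{Z}}}(\varepsilon)$, then for all $\sigma\in\{-,+\}$, writing $m_n=2\lceil n/2\rceil+1$, $$-I^{p_\sigma}_{\mathrm{Cr}}(0)-g(\varepsilon)\le\liminf_{n\to\infty}\frac1n\log\mathbb{P}_{\sigma R}\big(\Omega^\sigma_{m_n,\mathrm{exc}}\big)\le\limsup_{n\to\infty}\frac1n\log\mathbb{P}_{\sigma R}\big(\Omega^\sigma_{m_n,\mathrm{exc}}\big)\le-I^{p_\sigma}_{\mathrm{Cr}}(0)+g(\varepsilon),$$ $$-\inf_{\sigma x\in[0,1]}I^{p_\sigma}_{\mathrm{Cr}}(x)-g(\varepsilon)\le\liminf_{n\to\infty}\frac1n\log\mathbb{P}_{\sigma R}\big(\Omega^\sigma_{m_n,\mathrm{mea}}\big)\le\limsup_{n\to\infty}\frac1n\log\mathbb{P}_{\sigma R}\big(\Omega^\sigma_{m_n,\mathrm{mea}}\big)\le-\inf_{\sigma x\in[0,1]}I^{p_\sigma}_{\mathrm{Cr}}(x)+g(\varepsilon).$$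
   Context: Let $p:\mathbb{Z}\to[0,1]$ with $0<p(k)<1$ for all $k$ and limits $p_-=\lim_{k\to-\infty}p(k)$, $p_+=\lim_{k\to+\infty}p(k)$ in $(0,1)$. For $m\in\mathbb{Z}$, under $\mathbb{P}_m$, $(S_n)_{n\ge1}$ is the nearest-neighbour walk on $\mathbb{Z}$ with $S_1=m$, stepping $k\to k+1$ w.p. $p(k)$ and $k\to k-1$ w.p. $1-p(k)$. For a set $U$ of words of length $n$, $\mathbb{P}_m(U)$ means $\mathbb{P}_m((S_1,\dots,S_n)\in U)$. Signs $\sigma\in\{-,+\}$ are identified with $\mp1$, so $\sigma R=\pm R$. For $R\in\mathbb{N}$: $A^+=\{k\in\mathbb{Z}:k\ge R\}$, $A^-=\{k\in\mathbb{Z}:k\le-R\}$; $\Omega^\sigma_{n,\mathrm{exc}}$ is the set of $w=(w_1,\dots,w_n)\in\mathbb{Z}^n$ with $|w_i-w_{i+1}|=1$, $w_1=w_n=\sigma R$ and $w_j\in A^\sigma$ for all $j$; $\Omega^\sigma_{n,\mathrm{mea}}$ is the same without the condition on $w_n$. $R_{\overline{\mathbb{Z}}}(\varepsilon)=\lceil\log_2(1/\varepsilon)\rceil+1$. $G(\varepsilon)=\max_{\sigma\in\{-,+\}}\frac1{\min\{p_\sigma,1-p_\sigma\}}\sup_{k:\ \sigma k\ge R_{\overline{\mathbb{Z}}}(\varepsilon)}|p(k)-p_\sigma|$, which tends to $0$ as $\varepsilon\to0^+$; $\varepsilon^*>0$ is fixed such that $G(\varepsilon)<1$ for all $\varepsilon\in(0,\varepsilon^*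 )$. For $q\in(0,1)$, $I^q_{\mathrm{Cr}}(x)=\frac{1-x}{2}\log\frac{1-x}{2(1-q)}+\frac{1+x}{2}\log\frac{1+x}{2q}$ on $[-1,1]$ and $+\infty$ elsewhere. *)

From Stdlib Require Import Reals Lra Lia ZArith List.
From Coquelicot Require Import Coquelicot.
Import ListNotations.
Open Scope R_scope.

Inductive sgn := Minus | Plus.
Definition sz (s : sgn) : Z := match s with Minus => (-1)%Z | Plus => 1%Z end.
Definition sR (s : sgn) : R := IZR (sz s).
Definition psig (pm pp : R) (s : sgn) : R := match s with Minus => pm | Plus => pp end.

Definition ceilZ (x : R) : Z := (- Int_part (- x))%Z.

Definition RZ (eps : R) : Z := (ceilZ (ln (/ eps) / ln 2) + 1)%Z.

Definition Gsup (p : Z -> R) (pm pp : R) (s : sgn) (eps : R) : R :=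
  real (Lub_Rbar (fun y => exists k : Z,
          (sz s * k >= RZ eps)%Z /\ y = Rabs (p k - psig pm pp s))).

Definition G (p : Z -> R) (pm pp : R) (eps : R) : R :=
  Rmax (/ Rmin (psig pm pp Minus) (1 - psig pm pp Minus) * Gsup p pm pp Minus eps)
       (/ Rmin (psig pm pp Plus) (1 - psig pm pp Plus) * Gsup p pm pp Plus eps).

(* Cramer rate function of a +-1 step with P(+1)=q; +oo outside [-1,1].
   (Stdlib's ln 0 = 0 gives the convention 0 log 0 = 0 at x = +-1.) *)
Definition ICr (q x : R) : Rbar :=
  if Rle_dec (-1) x then
    if Rle_dec x 1 then
      Finite ((1 - x) / 2 * ln ((1 - x) / (2 * (1 - q)))
              + (1 + x) / 2 * ln ((1 + x) / (2 * q)))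
    else p_infty
  else p_infty.

Definition ICr_inf (q : R) (s : sgn) : Rbar :=
  Glb_Rbar (fun y => exists x : R, 0 <= sR s * x <= 1 /\ ICr q x = Finite y).

Fixpoint walk (m : Z) (st : list bool) : list Z :=
  m :: match st with
       | nil => nil
       | b :: st' => walk (if b then (m + 1)%Z else (m - 1)%Z) st'
       end.

Fixpoint wprob (p : Z -> R) (m : Z) (st : list bool) : R :=
  match st with
  | nil => 1
  | b :: st' => (if b then p m else 1 - p m) *
                wprob p (if b then (m + 1)%Z else (m - 1)%Z) st'
  end.

Fixpoint allsteps (k : nat) : list (list bool) :=
  match k with
  | O => [nil]
  | S k' => map (cons true) (allsteps k') ++ map (cons false) (allsteps k')
  end.

(* P_m((S_1,...,S_n) in U), S_1 = m, for a (decidable) set U of words. *)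
Definition Pw (p : Z -> R) (m : Z) (n : nat) (U : list Z -> bool) : R :=
  fold_right Rplus 0
    (map (fun st => wprob p m st * (if U (walk m st) then 1 else 0))
         (allsteps (n - 1))).

Fixpoint nn (w : list Z) : bool :=
  match w with
  | a :: ((b :: _) as w') => (Z.eqb (Z.abs (a - b)) 1) && nn w'
  | _ => true
  end.

Definition inA (s : sgn) (Rad : nat) (k : Z) : bool :=
  Z.geb (sz s * k) (Z.of_nat Rad).

Definition Omega_mea (s : sgn) (Rad n : nat) (w : list Z) : bool :=
  Nat.eqb (length w) n && nn w &&
  Z.eqb (hd 0%Z w) (sz s * Z.of_nat Rad) && forallb (inA s Rad) w.

Definition Omega_exc (s : sgn) (Rad n : nat) (w : list Z) : bool :=
  Omega_mea s Rad n w && Z.eqb (last w 0%Z) (sz s * Z.of_nat Rad).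

Definition mlen (n : nat) : nat := (2 * ((n + 1) / 2) + 1)%nat.

From Stdlib Require Import Reals ZArith List Lia Lra Binomial.
From Coquelicot Require Import Coquelicot.
Open Scope R_scope.

(* Measured from the boundary of A^s, a word of Omega^s is a path of a walk on
   the half-line y >= 0 that is killed on leaving it, and beyond R_Z(eps) its
   outward step probability is within a factor 1 +- G(eps) of the limiting one,
   q_out.  Upper bounds: exp (lam y) with the tilt lam = (ln (1 - q_out) - ln q_out) / 2
   grows by at most (1 + G) sqrt (4 q (1 - q)) per step.  Lower bounds: each step
   costs at most a factor 1 - G against the homogeneous walk, for which the
   ballot formula gives the excursions of length 2j a mass of at least
   (4 q (1 - q))^j / (2j + 1)^2, and gambler's ruin gives the meanders a mass
   bounded below when the drift points outward.  Since -I_Cr(0) = ln (4 q (1 - q)) / 2,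
   and the infimum for meanders is this or 0 by the Legendre bound on I_Cr,
   everything holds with g(eps) = - ln (1 - G(eps)). *)

Definition ind (b : bool) : R := if b then 1 else 0.

Lemma ind_andb a b : ind (a && b) = ind a * ind b.
Proof. destruct a, b; simpl; ring. Qed.

Definition sum_steps (k : nat) (F : list bool -> R) : R :=
  fold_right Rplus 0 (map F (allsteps k)).

Lemma fold_right_Rplus_app (l1 l2 : list R) :
  fold_right Rplus 0 (l1 ++ l2) = fold_right Rplus 0 l1 + fold_right Rplus 0 l2.
Proof. induction l1 as [|a l1 IH]; simpl; [ring | rewrite IH; ring]. Qed.

Lemma fold_right_Rplus_scal (c : R) (l : list R) :
  fold_right Rplus 0 (map (Rmult c) l) = c * fold_right Rplus 0 l.
Proof. induction l as [|a l IH]; simpl; [ring | rewrite IH; ring]. Qed.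

Lemma allsteps_length k st : In st (allsteps k) -> length st = k.
Proof.
  revert st; induction k as [|k IH]; simpl; intros st Hst.
  - destruct Hst as [<- | []]; reflexivity.
  - apply in_app_or in Hst.
    destruct Hst as [Hst | Hst]; apply in_map_iff in Hst;
      destruct Hst as [st' [<- Hst']]; simpl; f_equal; auto.
Qed.

Lemma sum_steps_0 F : sum_steps 0 F = F nil.
Proof. unfold sum_steps; simpl; ring. Qed.

Lemma sum_steps_S k F :
  sum_steps (S k) F = sum_steps k (fun st => F (true :: st)) + sum_steps k (fun st => F (false :: st)).
Proof. unfold sum_steps; simpl. rewrite map_app, fold_right_Rplus_app, !map_map. reflexivity. Qed.

Lemma sum_steps_scal k c F : sum_steps k (fun st => c * F st) = c * sum_steps k F.
Proof. unfold sum_steps. rewrite <- fold_right_Rplus_scal, map_map. reflexivity. Qed.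

Lemma sum_steps_ext k F1 F2 :
  (forall st, length st = k -> F1 st = F2 st) -> sum_steps k F1 = sum_steps k F2.
Proof.
  intros HF; unfold sum_steps; f_equal.
  apply map_ext_in; intros st Hst; apply HF, allsteps_length, Hst.
Qed.

Lemma walk_head m st : exists w, walk m st = m :: w.
Proof. destruct st; eexists; reflexivity. Qed.

Lemma walk_length m st : length (walk m st) = S (length st).
Proof. revert m; induction st as [|b st IH]; intros m; simpl; [reflexivity | rewrite IH; reflexivity]. Qed.

Lemma nn_walk m st : nn (walk m st) = true.
Proof.
  revert m; induction st as [|b st IH]; intros m; [reflexivity |].
  change (walk m (b :: st)) with (m :: walk (if b then (m + 1)%Z else (m - 1)%Z) st).
  destruct (walk_head (if b then (m + 1)%Z else (m - 1)%Z) st) as [w Hw].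
  rewrite Hw. change (nn (m :: ?y :: w)) with (Z.eqb (Z.abs (m - y)) 1 && nn (y :: w))%bool.
  rewrite <- Hw, IH, Bool.andb_true_r. apply Z.eqb_eq; destruct b; lia.
Qed.

Definition walk_mass (p : Z -> R) (U : list Z -> bool) (k : nat) (x : Z) : R :=
  sum_steps k (fun st => wprob p x st * ind (U (walk x st))).

Definition checks_head (a : Z -> bool) (U : list Z -> bool) : Prop :=
  forall x w, w <> nil -> U (x :: w) = (a x && U w)%bool.

Lemma walk_mass_0 p U x : walk_mass p U 0 x = ind (U (x :: nil)).
Proof. unfold walk_mass. rewrite sum_steps_0. simpl. ring. Qed.

Lemma walk_mass_S p a U k x : checks_head a U ->
  walk_mass p U (S k) x =
  ind (a x) * (p x * walk_mass p U k (x + 1) + (1 - p x) * walk_mass p U k (x - 1)).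
Proof.
  intros HU. unfold walk_mass. rewrite sum_steps_S, Rmult_plus_distr_l, <- !sum_steps_scal.
  f_equal; apply sum_steps_ext; intros st _; simpl wprob.
  - change (walk x (true :: st)) with (x :: walk (x + 1)%Z st).
    destruct (walk_head (x + 1)%Z st) as [w Hw].
    rewrite HU by (rewrite Hw; discriminate). rewrite ind_andb. ring.
  - change (walk x (false :: st)) with (x :: walk (x - 1)%Z st).
    destruct (walk_head (x - 1)%Z st) as [w Hw].
    rewrite HU by (rewrite Hw; discriminate). rewrite ind_andb. ring.
Qed.

Lemma Pw_walk_mass p m n U V :
  (forall st, length st = (n - 1)%nat -> U (walk m st) = V (walk m st)) ->
  Pw p m n U = walk_mass p V (n - 1) m.
Proof.
  intros HUV. apply sum_steps_ext. intros st Hst. rewrite HUV by exact Hst. reflexivity.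
Qed.

(* [killed_mean P b k y] is E_y[b(Y_k); Y_0, ..., Y_(k-1) >= 0] for the walk Y
   stepping y -> y + 1 with probability [P y] and y -> y - 1 otherwise. *)
Fixpoint killed_mean (P : Z -> R) (b : Z -> R) (k : nat) (y : Z) : R :=
  match k with
  | O => b y
  | S k => if (y <? 0)%Z then 0
           else P y * killed_mean P b k (y + 1) + (1 - P y) * killed_mean P b k (y - 1)
  end.

Lemma killed_mean_ext P b1 b2 : (forall y, b1 y = b2 y) ->
  forall k y, killed_mean P b1 k y = killed_mean P b2 k y.
Proof. intros Hb k; induction k as [|k IH]; intros y; simpl; [apply Hb | rewrite !IH; reflexivity]. Qed.

(* Depth [y] inside [A^s] is position [s (y + Rad)]; [p_out] is the probability
   of the step away from the boundary. *)
Definition pos_of_depth (s : sgn) (Rad : nat) (y : Z) : Z := (sz s * (y + Z.of_nat Rad))%Z.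

Definition p_out (p : Z -> R) (s : sgn) (Rad : nat) (y : Z) : R :=
  match s with
  | Plus => p (pos_of_depth s Rad y)
  | Minus => 1 - p (pos_of_depth s Rad y)
  end.

Lemma sz_sz s z : (sz s * (sz s * z) = z)%Z.
Proof. destruct s; unfold sz; lia. Qed.

Lemma inA_pos_of_depth s Rad y : inA s Rad (pos_of_depth s Rad y) = negb (y <? 0)%Z.
Proof.
  unfold inA, pos_of_depth. rewrite sz_sz.
  destruct (Z.ltb_spec y 0); destruct (Z.geb_spec (y + Z.of_nat Rad) (Z.of_nat Rad)); simpl; lia.
Qed.

Lemma walk_mass_killed p s Rad U : checks_head (inA s Rad) U ->
  forall k y, walk_mass p U k (pos_of_depth s Rad y) =
    killed_mean (p_out p s Rad) (fun y => walk_mass p U 0 (pos_of_depth s Rad y)) k y.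
Proof.
  intros HU k; induction k as [|k IH]; intros y; [reflexivity |].
  rewrite (walk_mass_S p _ _ _ _ HU), inA_pos_of_depth. simpl killed_mean.
  destruct (y <? 0)%Z; simpl; [ring |].
  destruct s.
  - replace (pos_of_depth Minus Rad y + 1)%Z with (pos_of_depth Minus Rad (y - 1)) by (unfold pos_of_depth, sz; lia).
    replace (pos_of_depth Minus Rad y - 1)%Z with (pos_of_depth Minus Rad (y + 1)) by (unfold pos_of_depth, sz; lia).
    rewrite !IH. change (p_out p Minus Rad y) with (1 - p (pos_of_depth Minus Rad y)). ring.
  - replace (pos_of_depth Plus Rad y + 1)%Z with (pos_of_depth Plus Rad (y + 1)) by (unfold pos_of_depth, sz; lia).
    replace (pos_of_depth Plus Rad y - 1)%Z with (pos_of_depth Plus Rad (y - 1)) by (unfold pos_of_depth, sz; lia).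
    rewrite !IH. change (p_out p Plus Rad y) with (p (pos_of_depth Plus Rad y)). ring.
Qed.

Definition stays (s : sgn) (Rad : nat) : list Z -> bool := forallb (inA s Rad).

Definition stays_returns (s : sgn) (Rad : nat) (w : list Z) : bool :=
  stays s Rad w && Z.eqb (last w 0%Z) (sz s * Z.of_nat Rad).

Lemma checks_head_stays s Rad : checks_head (inA s Rad) (stays s Rad).
Proof. intros x w _. reflexivity. Qed.

Lemma checks_head_stays_returns s Rad : checks_head (inA s Rad) (stays_returns s Rad).
Proof.
  intros x [|y w] Hw; [congruence |].
  unfold stays_returns, stays. simpl forallb. rewrite !Bool.andb_assoc. reflexivity.
Qed.

Definition ind_nonneg (y : Z) : R := ind (0 <=? y)%Z.
Definition ind_zero (y : Z) : R := ind (y =? 0)%Z.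

Lemma Omega_mea_walk s Rad n st : length st = (n - 1)%nat -> (1 <= n)%nat ->
  Omega_mea s Rad n (walk (sz s * Z.of_nat Rad) st) = stays s Rad (walk (sz s * Z.of_nat Rad) st).
Proof.
  intros Hst Hn. unfold Omega_mea.
  rewrite walk_length, nn_walk, Hst. replace (S (n - 1)) with n by lia.
  destruct (walk_head (sz s * Z.of_nat Rad) st) as [w Hw]. rewrite Hw; simpl hd.
  rewrite Nat.eqb_refl, Z.eqb_refl. reflexivity.
Qed.

Lemma Pw_mea_killed p s Rad n : (1 <= n)%nat ->
  Pw p (sz s * Z.of_nat Rad) n (Omega_mea s Rad n) = killed_mean (p_out p s Rad) ind_nonneg (n - 1) 0.
Proof.
  intros Hn. rewrite (Pw_walk_mass _ _ _ _ (stays s Rad)) by (intros; apply Omega_mea_walk; auto).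
  change (sz s * Z.of_nat Rad)%Z with (pos_of_depth s Rad 0).
  rewrite walk_mass_killed by apply checks_head_stays.
  apply killed_mean_ext. intros y. rewrite walk_mass_0. unfold ind_nonneg, stays. simpl forallb.
  rewrite inA_pos_of_depth, Bool.andb_true_r, Z.ltb_antisym, Bool.negb_involutive. reflexivity.
Qed.

Lemma Pw_exc_killed p s Rad n : (1 <= n)%nat ->
  Pw p (sz s * Z.of_nat Rad) n (Omega_exc s Rad n) = killed_mean (p_out p s Rad) ind_zero (n - 1) 0.
Proof.
  intros Hn. rewrite (Pw_walk_mass _ _ _ _ (stays_returns s Rad)).
  2: { intros st Hst. unfold Omega_exc, stays_returns. rewrite Omega_mea_walk by auto. reflexivity. }
  change (sz s * Z.of_nat Rad)%Z with (pos_of_depth s Rad 0).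
  rewrite walk_mass_killed by apply checks_head_stays_returns.
  apply killed_mean_ext. intros y. rewrite walk_mass_0. unfold ind_zero, stays_returns, stays.
  simpl. rewrite inA_pos_of_depth. unfold pos_of_depth.
  destruct (Z.ltb_spec y 0), (Z.eqb_spec y 0),
    (Z.eqb_spec (sz s * (y + Z.of_nat Rad)) (sz s * Z.of_nat Rad)); simpl;
    try reflexivity; destruct s; unfold sz in *; lia.
Qed.

Lemma killed_mean_ge0 P b : (forall y, 0 <= P y <= 1) -> (forall y, 0 <= b y) -> forall k y, 0 <= killed_mean P b k y.
Proof.
  intros P01 Hb k; induction k as [|k IH]; intros y; simpl; [apply Hb |].
  destruct (y <? 0)%Z; [lra |].
  specialize (P01 y). pose proof (IH (y + 1)%Z). pose proof (IH (y - 1)%Z). nra.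
Qed.

Lemma killed_mean_le_compat P b b' : (forall y, 0 <= P y <= 1) -> (forall y, b y <= b' y) ->
  forall k y, killed_mean P b k y <= killed_mean P b' k y.
Proof.
  intros P01 Hb k; induction k as [|k IH]; intros y; simpl; [apply Hb |].
  destruct (y <? 0)%Z; [lra |].
  specialize (P01 y). pose proof (IH (y + 1)%Z). pose proof (IH (y - 1)%Z). nra.
Qed.

(* [exp (lam * y) / K ^ k] is a supermartingale for the killed walk. *)
Lemma killed_mean_le_exp P b lam K : (forall y, 0 <= P y <= 1) ->
  (forall y, (0 <= y)%Z -> P y * exp lam + (1 - P y) * exp (- lam) <= K) -> 0 <= K ->
  (forall y, b y <= exp (lam * IZR y)) ->
  forall k y, killed_mean P b k y <= K ^ k * exp (lam * IZR y).
Proof.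
  intros P01 HK K0 Hb k; induction k as [|k IH]; intros y; simpl killed_mean.
  - rewrite pow_O, Rmult_1_l. apply Hb.
  - assert (E0 : 0 <= K ^ k * exp (lam * IZR y))
      by (apply Rmult_le_pos; [apply pow_le; lra | left; apply exp_pos]).
    destruct (Z.ltb_spec y 0) as [_ | Hy]; [simpl; nra |].
    pose proof (IH (y + 1)%Z) as Hup. pose proof (IH (y - 1)%Z) as Hdown.
    rewrite plus_IZR, Rmult_plus_distr_l, Rmult_1_r, exp_plus in Hup.
    rewrite minus_IZR, Rmult_minus_distr_l, Rmult_1_r in Hdown.
    unfold Rminus in Hdown. rewrite exp_plus in Hdown.
    specialize (P01 y). specialize (HK y Hy).
    apply Rle_trans with ((K ^ k * exp (lam * IZR y)) * (P y * exp lam + (1 - P y) * exp (- lam))).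
    + nra.
    + replace (K ^ S k * exp (lam * IZR y)) with ((K ^ k * exp (lam * IZR y)) * K) by (simpl; ring).
      apply Rmult_le_compat_l; assumption.
Qed.

Lemma killed_mean_ge_const P b q a : (forall y, 0 <= P y <= 1) -> 0 <= q <= 1 -> (forall y, 0 <= b y) -> 0 <= a ->
  (forall y, (0 <= y)%Z -> a * q <= P y /\ a * (1 - q) <= 1 - P y) ->
  forall k y, a ^ k * killed_mean (fun _ => q) b k y <= killed_mean P b k y.
Proof.
  intros P01 q01 Hb a0 Ha k; induction k as [|k IH]; intros y; simpl killed_mean.
  - simpl; lra.
  - destruct (Z.ltb_spec y 0) as [_ | Hy]; [simpl; lra |].
    destruct (Ha y Hy) as [Hup Hdown]. specialize (P01 y).
    pose proof (IH (y + 1)%Z). pose proof (IH (y - 1)%Z).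
    assert (0 <= a ^ k * killed_mean (fun _ => q) b k (y + 1)).
    { apply Rmult_le_pos; [apply pow_le; lra | apply killed_mean_ge0; auto; intros; lra]. }
    assert (0 <= a ^ k * killed_mean (fun _ => q) b k (y - 1)).
    { apply Rmult_le_pos; [apply pow_le; lra | apply killed_mean_ge0; auto; intros; lra]. }
    simpl pow. nra.
Qed.

Lemma ind_zero_le_ind_nonneg y : ind_zero y <= ind_nonneg y.
Proof. unfold ind_zero, ind_nonneg, ind; destruct (Z.eqb_spec y 0), (Z.leb_spec 0 y); lra || lia. Qed.

Lemma ind_nonneg_ge0 y : 0 <= ind_nonneg y.
Proof. unfold ind_nonneg, ind; destruct (0 <=? y)%Z; lra. Qed.

Lemma ind_zero_ge0 y : 0 <= ind_zero y.
Proof. unfold ind_zero, ind; destruct (y =? 0)%Z; lra. Qed.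

(* Gambler's ruin: from depth n the homogeneous walk never dies with
   probability 1 - ((1 - q) / q) ^ (n + 1). *)
Lemma killed_const_nonneg_ge q : 0 < q <= 1 ->
  forall k n, 1 - ((1 - q) / q) ^ S n <= killed_mean (fun _ => q) ind_nonneg k (Z.of_nat n).
Proof.
  intros q01. set (r := (1 - q) / q).
  assert (r0 : 0 <= r) by (unfold r; apply Rdiv_le_0_compat; lra).
  intros k; induction k as [|k IH]; intros n; simpl killed_mean.
  - unfold ind_nonneg, ind. destruct (Z.leb_spec 0 (Z.of_nat n)); [| lia].
    pose proof (pow_le r (S n) r0). lra.
  - destruct (Z.ltb_spec (Z.of_nat n) 0); [lia |].
    replace (Z.of_nat n + 1)%Z with (Z.of_nat (S n)) by lia.
    assert (Hdown : 1 - r ^ n <= killed_mean (fun _ => q) ind_nonneg k (Z.of_nat n - 1)).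
    { destruct n as [|n].
      - rewrite pow_O, Rminus_diag. apply killed_mean_ge0; [intros; lra | apply ind_nonneg_ge0].
      - replace (Z.of_nat (S n) - 1)%Z with (Z.of_nat n) by lia. apply IH. }
    assert (E : q * (1 - r ^ S (S n)) + (1 - q) * (1 - r ^ n) = 1 - r ^ S n)
      by (simpl; unfold r; field; lra).
    pose proof (IH (S n)). rewrite <- E. nra.
Qed.

Definition binom (n i : nat) : R := if (i <=? n)%nat then Binomial.C n i else 0.

Lemma binom_diag n : binom n n = 1.
Proof.
  unfold binom, Binomial.C. rewrite Nat.leb_refl, Nat.sub_diag. simpl.
  field. apply INR_fact_neq_0.
Qed.

Lemma binom_0 n : binom n 0 = 1.
Proof. unfold binom, Binomial.C. simpl. rewrite Nat.sub_0_r. field. apply INR_fact_neq_0. Qed.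

Lemma binom_over n i : (n < i)%nat -> binom n i = 0.
Proof. intros H. unfold binom. destruct (Nat.leb_spec i n); [lia | reflexivity]. Qed.

Lemma binom_pascal n i : binom (S n) (S i) = binom n i + binom n (S i).
Proof.
  destruct (Nat.lt_trichotomy i n) as [H | [-> | H]].
  - unfold binom. destruct (Nat.leb_spec (S i) (S n)), (Nat.leb_spec i n), (Nat.leb_spec (S i) n);
      try lia. symmetry; apply pascal; exact H.
  - rewrite !binom_diag, binom_over by lia. ring.
  - rewrite !binom_over by lia. ring.
Qed.

Lemma binom_central_sym d : binom (S (d + d)) d = binom (S (d + d)) (S d).
Proof.
  unfold binom. destruct (Nat.leb_spec d (S (d + d))), (Nat.leb_spec (S d) (S (d + d))); try lia.
  rewrite pascal_step1 by lia. f_equal. lia.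
Qed.

(* The reflection principle counts the nonnegative paths from d - u to 0
   with u up-steps and d down-steps: C(u+d, d) - C(u+d, d+1). *)
Definition ballot (q : R) (u d : nat) : R :=
  q ^ u * (1 - q) ^ d * (binom (u + d) d - binom (u + d) (S d)).

Lemma killed_const_zero_neg q k y : (y < 0)%Z -> killed_mean (fun _ => q) ind_zero k y = 0.
Proof.
  intros Hy; destruct k; simpl.
  - unfold ind_zero, ind. destruct (Z.eqb_spec y 0); [lia | reflexivity].
  - destruct (Z.ltb_spec y 0); [reflexivity | lia].
Qed.

Lemma killed_const_zero_far q k y : (Z.of_nat k < y)%Z -> killed_mean (fun _ => q) ind_zero k y = 0.
Proof.
  revert y; induction k as [|k IH]; intros y Hy; simpl.
  - unfold ind_zero, ind. destruct (Z.eqb_spec y 0); [lia | reflexivity].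
  - destruct (Z.ltb_spec y 0); [reflexivity |]. rewrite !IH by lia. ring.
Qed.

Lemma killed_const_zero_ballot q : forall k u d, (u + d = k)%nat -> (u <= S d)%nat ->
  killed_mean (fun _ => q) ind_zero k (Z.of_nat d - Z.of_nat u) = ballot q u d.
Proof.
  intros k; induction k as [|k IH]; intros u d Hk Hud.
  - assert (u = 0%nat) by lia; assert (d = 0%nat) by lia; subst.
    unfold ballot, ind_zero, ind. simpl. rewrite binom_diag, binom_over by lia. ring.
  - destruct (Nat.eq_dec u (S d)) as [-> | Hu].
    { rewrite killed_const_zero_neg by lia. unfold ballot.
      replace (S d + d)%nat with (S (d + d)) by lia. rewrite binom_central_sym. ring. }
    simpl killed_mean. destruct (Z.ltb_spec (Z.of_nat d - Z.of_nat u) 0); [lia |].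
    destruct d as [|d]; [lia |].
    replace (Z.of_nat (S d) - Z.of_nat u - 1)%Z with (Z.of_nat d - Z.of_nat u)%Z by lia.
    rewrite (IH u d) by lia.
    destruct u as [|u].
    + rewrite killed_const_zero_far by lia. unfold ballot. simpl plus.
      rewrite !binom_diag, !binom_over by lia. simpl. ring.
    + replace (Z.of_nat (S d) - Z.of_nat (S u) + 1)%Z with (Z.of_nat (S d) - Z.of_nat u)%Z by lia.
      rewrite (IH u (S d)) by lia. unfold ballot.
      replace (S u + S d)%nat with (S (u + S d)) by lia.
      replace (S u + d)%nat with (u + S d)%nat by lia.
      rewrite (binom_pascal (u + S d) (S d)), (binom_pascal (u + S d) d).
      simpl pow. ring.
Qed.

Lemma C_central_succ j : Binomial.C (S j + S j) (S j) =
  Binomial.C (j + j) j * (INR (S (j + j)) * INR (S (S (j + j)))) / (INR (S j) * INR (S j)).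
Proof.
  unfold Binomial.C.
  replace (S j + S j - S j)%nat with (S j) by lia.
  replace (j + j - j)%nat with j by lia.
  replace (S j + S j)%nat with (S (S (j + j))) by lia.
  rewrite (fact_simpl (S (j + j))), (fact_simpl (j + j)), (fact_simpl j), !mult_INR.
  field. repeat split; try apply INR_fact_neq_0; apply not_0_INR; lia.
Qed.

Lemma C_central_ge j : 4 ^ j / INR (S (j + j)) <= Binomial.C (j + j) j.
Proof.
  induction j as [|j IH].
  - unfold Binomial.C. simpl. lra.
  - rewrite C_central_succ.
    assert (E1 : INR (S (j + j)) = 2 * INR j + 1) by (rewrite S_INR, plus_INR; ring).
    assert (E2 : INR (S (S (j + j))) = 2 * INR j + 2) by (rewrite !S_INR, plus_INR; ring).
    assert (E3 : INR (S j) = INR j + 1) by (rewrite S_INR; ring).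
    assert (E4 : INR (S (S j + S j)) = 2 * INR j + 3) by (rewrite S_INR, plus_INR, S_INR; ring).
    rewrite E1 in IH. rewrite E1, E2, E3, E4.
    set (c := Binomial.C (j + j) j) in *. set (x := INR j).
    assert (x0 : 0 <= x) by apply pos_INR.
    assert (P4 : 0 < 4 ^ j) by (apply pow_lt; lra).
    assert (Hc : 4 ^ j <= c * (2 * x + 1)).
    { apply Rmult_le_reg_r with (/ (2 * x + 1)); [apply Rinv_0_lt_compat; lra |].
      rewrite Rmult_assoc, Rinv_r, Rmult_1_r by lra. exact IH. }
    simpl pow.
    apply Rmult_le_reg_r with ((2 * x + 3) * ((x + 1) * (x + 1))); [nra |].
    replace (4 * 4 ^ j / (2 * x + 3) * ((2 * x + 3) * ((x + 1) * (x + 1))))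
      with (4 * 4 ^ j * ((x + 1) * (x + 1))) by (field; lra).
    replace (c * ((2 * x + 1) * (2 * x + 2)) / ((x + 1) * (x + 1)) * ((2 * x + 3) * ((x + 1) * (x + 1))))
      with (c * (2 * x + 1) * ((2 * x + 2) * (2 * x + 3))) by (field; lra).
    nra.
Qed.

Lemma ballot_diag j q : ballot q j j = q ^ j * (1 - q) ^ j * (Binomial.C (j + j) j / INR (S j)).
Proof.
  unfold ballot. f_equal. destruct j as [|j].
  - rewrite binom_0, binom_over by lia. unfold Binomial.C. simpl. field.
  - unfold binom. destruct (Nat.leb_spec (S j) (S j + S j)), (Nat.leb_spec (S (S j)) (S j + S j)); try lia.
    unfold Binomial.C.
    replace (S j + S j - S (S j))%nat with j by lia.
    replace (S j + S j - S j)%nat with (S j) by lia.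
    rewrite (fact_simpl (S j)), (fact_simpl j), !mult_INR, !S_INR.
    pose proof (pos_INR j). pose proof (INR_fact_neq_0 j). pose proof (INR_fact_neq_0 (S j + S j)).
    field. repeat split; lra.
Qed.

Lemma ballot_diag_ge q j : 0 <= q <= 1 -> (4 * q * (1 - q)) ^ j / INR (S (j + j)) ^ 2 <= ballot q j j.
Proof.
  intros q01. rewrite ballot_diag, !Rpow_mult_distr.
  assert (N1 : 0 < INR (S j)) by (apply lt_0_INR; lia).
  assert (N12 : INR (S j) <= INR (S (j + j))) by (apply le_INR; lia).
  assert (Q0 : 0 <= q ^ j * (1 - q) ^ j) by (apply Rmult_le_pos; apply pow_le; lra).
  replace (4 ^ j * q ^ j * (1 - q) ^ j / INR (S (j + j)) ^ 2)
    with (q ^ j * (1 - q) ^ j * ((4 ^ j / INR (S (j + j))) / INR (S (j + j)))) by (field; lra).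
  apply Rmult_le_compat_l; [exact Q0 |].
  apply Rmult_le_compat; [| left; apply Rinv_0_lt_compat; lra | apply C_central_ge | apply Rinv_le_contravar; lra].
  apply Rdiv_le_0_compat; [apply pow_le; lra | lra].
Qed.

Lemma exp_tilt_balance u v : 0 < u -> 0 < v ->
  u * exp ((ln v - ln u) / 2) + v * exp (- ((ln v - ln u) / 2)) = exp (ln (4 * u * v) / 2).
Proof.
  intros u0 v0.
  rewrite <- (exp_ln u) at 1 by lra. rewrite <- (exp_ln v) at 2 by lra.
  rewrite <- !exp_plus.
  replace (ln u + (ln v - ln u) / 2) with ((ln u + ln v) / 2) by field.
  replace (ln v + - ((ln v - ln u) / 2)) with ((ln u + ln v) / 2) by field.
  replace 4 with (2 * 2) by ring. rewrite !ln_mult by lra.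
  replace ((ln 2 + ln 2 + ln u + ln v) / 2) with (ln 2 + (ln u + ln v) / 2) by field.
  rewrite exp_plus, exp_ln by lra. ring.
Qed.

Lemma one_minus_inv_le_ln z : 0 < z -> 1 - / z <= ln z.
Proof.
  intros z0. pose proof (exp_ineq1_le (ln (/ z))) as H.
  rewrite exp_ln in H by (apply Rinv_0_lt_compat; lra).
  rewrite ln_Rinv in H by lra. lra.
Qed.

(* One term of Gibbs' inequality, for the weight [a] against [c / S]. *)
Lemma gibbs_term a c S : 0 <= a -> 0 < c -> 0 < S -> a - c / S - a * ln S <= a * ln (a / c).
Proof.
  intros a0 c0 S0. destruct (Req_dec a 0) as [-> | Ha].
  { assert (0 <= c / S) by (apply Rdiv_le_0_compat; lra). lra. }
  assert (Z0 : 0 < a * S / c) by (apply Rdiv_lt_0_compat; [apply Rmult_lt_0_compat |]; lra).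
  replace (a / c) with ((a * S / c) * / S) by (field; lra).
  rewrite ln_mult, ln_Rinv by (try apply Rinv_0_lt_compat; lra).
  pose proof (one_minus_inv_le_ln _ Z0) as H.
  replace (/ (a * S / c)) with (c / (a * S)) in H by (field; lra).
  apply Rmult_le_compat_l with (r := a) in H; [| lra].
  replace (a * (1 - c / (a * S))) with (a - c / S) in H by (field; lra).
  lra.
Qed.

Lemma mul_ln_div_exp b c lam : 0 <= b -> 0 < c ->
  b * ln (b / (c * exp lam)) = b * ln (b / c) - b * lam.
Proof.
  intros b0 c0. destruct (Req_dec b 0) as [-> | Hb]; [ring |].
  replace (b / (c * exp lam)) with ((b / c) * exp (- lam))
    by (rewrite exp_Ropp; field; split; [apply Rgt_not_eq, exp_pos | lra]).
  rewrite ln_mult, ln_exp; [ring | apply Rdiv_lt_0_compat; lra | apply exp_pos].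
Qed.

Lemma ICr_ge_legendre q x v lam : 0 < q < 1 -> ICr q x = Finite v ->
  lam * x - ln (q * exp lam + (1 - q) * exp (- lam)) <= v.
Proof.
  intros q01 HI. unfold ICr in HI.
  destruct (Rle_dec (-1) x); [| discriminate]. destruct (Rle_dec x 1); [| discriminate].
  injection HI as <-.
  set (a := (1 + x) / 2). set (b := (1 - x) / 2).
  assert (a0 : 0 <= a) by (unfold a; lra). assert (b0 : 0 <= b) by (unfold b; lra).
  replace ((1 - x) / (2 * (1 - q))) with (b / (1 - q)) by (unfold b; field; lra).
  replace ((1 + x) / (2 * q)) with (a / q) by (unfold a; field; lra).
  set (S := q * exp lam + (1 - q) * exp (- lam)).
  assert (U0 : 0 < q * exp lam) by (apply Rmult_lt_0_compat; [lra | apply exp_pos]).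
  assert (V0 : 0 < (1 - q) * exp (- lam)) by (apply Rmult_lt_0_compat; [lra | apply exp_pos]).
  assert (S0 : 0 < S) by (unfold S; lra).
  pose proof (gibbs_term a _ S a0 U0 S0) as Ga.
  pose proof (gibbs_term b _ S b0 V0 S0) as Gb.
  rewrite mul_ln_div_exp in Ga, Gb by lra.
  assert (E1 : q * exp lam / S + (1 - q) * exp (- lam) / S = 1) by (unfold S; field; lra).
  assert (E2 : a + b = 1) by (unfold a, b; field).
  assert (E3 : lam * x = a * lam - b * lam) by (unfold a, b; field).
  assert (E4 : a * ln S + b * ln S = ln S) by (rewrite <- Rmult_plus_distr_r, E2; ring).
  assert (E5 : b * - lam = - (b * lam)) by ring.
  rewrite E5 in Gb. lra.
Qed.

Lemma ICr_0 q : 0 < q < 1 -> ICr q 0 = Finite (- (ln (4 * q * (1 - q)) / 2)).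
Proof.
  intros q01. unfold ICr.
  destruct (Rle_dec (-1) 0); [| lra]. destruct (Rle_dec 0 1); [| lra].
  f_equal.
  replace ((1 - 0) / (2 * (1 - q))) with (/ (2 * (1 - q))) by (field; lra).
  replace ((1 + 0) / (2 * q)) with (/ (2 * q)) by (field; lra).
  replace (4 * q * (1 - q)) with ((2 * (1 - q)) * (2 * q)) by ring.
  rewrite (ln_mult (2 * (1 - q)) (2 * q)), !ln_Rinv by lra. field.
Qed.

Lemma ICr_mean q : 0 < q < 1 -> ICr q (2 * q - 1) = Finite 0.
Proof.
  intros q01. unfold ICr.
  destruct (Rle_dec (-1) (2 * q - 1)); [| lra]. destruct (Rle_dec (2 * q - 1) 1); [| lra].
  replace ((1 - (2 * q - 1)) / (2 * (1 - q))) with 1 by (field; lra).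
  replace ((1 + (2 * q - 1)) / (2 * q)) with 1 by (field; lra).
  rewrite ln_1. f_equal. ring.
Qed.

Lemma Glb_Rbar_min (E : R -> Prop) m : E m -> (forall y, E y -> m <= y) -> Glb_Rbar E = Finite m.
Proof.
  intros Em Hm. apply is_glb_Rbar_unique. split.
  - intros y Ey. apply Hm, Ey.
  - intros l Hl. apply Hl, Em.
Qed.

Lemma Lub_Rbar_real_le (E : R -> Prop) M : 0 <= M -> (forall y, E y -> y <= M) -> real (Lub_Rbar E) <= M.
Proof.
  intros M0 HE. destruct (Lub_Rbar_correct E) as [_ Hlub].
  assert (H : Rbar_le (Lub_Rbar E) (Finite M)) by (apply Hlub; intros y Ey; apply HE, Ey).
  destruct (Lub_Rbar E); simpl in *; lra || contradiction.
Qed.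

Lemma le_Lub_Rbar_real (E : R -> Prop) M y : E y -> (forall z, E z -> z <= M) -> y <= real (Lub_Rbar E).
Proof.
  intros Ey HE. destruct (Lub_Rbar_correct E) as [Hub Hlub].
  assert (H : Rbar_le (Lub_Rbar E) (Finite M)) by (apply Hlub; intros z Ez; apply HE, Ez).
  specialize (Hub y Ey). destruct (Lub_Rbar E); simpl in *; lra || contradiction.
Qed.

Lemma ceilZ_ge t : t <= IZR (ceilZ t).
Proof. unfold ceilZ. rewrite opp_IZR. destruct (base_Int_part (- t)). lra. Qed.

Lemma RZ_ge eps (N : nat) : 0 < eps < exp (- (INR N * ln 2)) -> (Z.of_nat N <= RZ eps)%Z.
Proof.
  intros [eps0 Heps]. unfold RZ. pose proof (ceilZ_ge (ln (/ eps) / ln 2)) as Hc.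
  assert (L2 : 0 < ln 2) by (rewrite <- ln_1; apply ln_increasing; lra).
  assert (HN : INR N < ln (/ eps) / ln 2).
  { rewrite ln_Rinv by lra. apply Rmult_lt_reg_r with (ln 2); [exact L2 |].
    replace (- ln eps / ln 2 * ln 2) with (- ln eps) by (field; lra).
    apply ln_increasing in Heps; [| exact eps0]. rewrite ln_exp in Heps. lra. }
  rewrite INR_IZR_INZ in HN.
  assert (Z.of_nat N - 1 < ceilZ (ln (/ eps) / ln 2))%Z by (apply lt_IZR; rewrite minus_IZR; simpl; lra).
  lia.
Qed.

Lemma neg_ln_one_minus_le t : 0 <= t <= 1 / 2 -> 0 <= - ln (1 - t) <= 2 * t.
Proof.
  intros Ht. split.
  - assert (ln (1 - t) <= 0) by (rewrite <- ln_1; apply ln_le; lra). lra.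
  - pose proof (one_minus_inv_le_ln (1 - t) ltac:(lra)) as H.
    replace (1 - / (1 - t)) with (- (t * / (1 - t))) in H by (field; lra).
    assert (t * / (1 - t) <= t * 2).
    { apply Rmult_le_compat_l; [lra |].
      apply Rmult_le_reg_l with (1 - t); [lra |]. rewrite Rinv_r; lra. }
    lra.
Qed.

Section ErrorFunction.
Variables (p : Z -> R) (pm pp : R).
Hypothesis p01 : forall k, 0 < p k < 1.
Hypothesis pm01 : 0 < pm < 1.
Hypothesis pp01 : 0 < pp < 1.

Lemma psig01 s : 0 < psig pm pp s < 1.
Proof. destruct s; simpl; auto. Qed.

Lemma min_psig_pos s : 0 < Rmin (psig pm pp s) (1 - psig pm pp s).
Proof. pose proof (psig01 s). apply Rmin_glb_lt; lra. Qed.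

Lemma dist_psig_le_Gsup s eps k : (sz s * k >= RZ eps)%Z ->
  Rabs (p k - psig pm pp s) <= Gsup p pm pp s eps.
Proof.
  intros Hk. apply le_Lub_Rbar_real with (M := 1); [exists k; split; auto |].
  intros z [k' [_ ->]]. pose proof (p01 k'). pose proof (psig01 s). apply Rabs_le; lra.
Qed.

Lemma dist_psig_le_G s eps k : (sz s * k >= RZ eps)%Z ->
  Rabs (p k - psig pm pp s) <= G p pm pp eps * Rmin (psig pm pp s) (1 - psig pm pp s).
Proof.
  intros Hk. pose proof (min_psig_pos s) as m0.
  set (m := Rmin (psig pm pp s) (1 - psig pm pp s)) in *.
  assert (HG : / m * Gsup p pm pp s eps <= G p pm pp eps) by (unfold G; destruct s; [apply Rmax_l | apply Rmax_r]).
  apply Rmult_le_compat_r with (r := m) in HG; [| lra].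
  replace (/ m * Gsup p pm pp s eps * m) with (Gsup p pm pp s eps) in HG by (field; lra).
  pose proof (dist_psig_le_Gsup s eps k Hk). lra.
Qed.

Lemma G_ge0 eps : 0 <= G p pm pp eps.
Proof.
  set (k := Z.max (RZ eps) 0).
  assert (Hk : (sz Plus * k >= RZ eps)%Z) by (unfold k, sz; lia).
  pose proof (dist_psig_le_G Plus eps k Hk). pose proof (Rabs_pos (p k - psig pm pp Plus)).
  pose proof (min_psig_pos Plus).
  destruct (Rle_lt_dec 0 (G p pm pp eps)); [assumption | nra].
Qed.

Hypothesis pm_lim : is_lim_seq (fun n : nat => p (- Z.of_nat n)%Z) pm.
Hypothesis pp_lim : is_lim_seq (fun n : nat => p (Z.of_nat n)) pp.

Lemma Gsup_small s eta : 0 < eta -> exists N : nat,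
  forall eps, (Z.of_nat N <= RZ eps)%Z -> Gsup p pm pp s eps <= eta.
Proof.
  intros eta0.
  assert (Hlim : is_lim_seq (fun n : nat => p (sz s * Z.of_nat n)%Z) (psig pm pp s)).
  { destruct s; [eapply is_lim_seq_ext; [| exact pm_lim] | eapply is_lim_seq_ext; [| exact pp_lim]];
      intros n; unfold sz; f_equal; lia. }
  apply is_lim_seq_spec in Hlim. destruct (Hlim (mkposreal _ eta0)) as [N HN].
  exists N. intros eps HRZ. apply Lub_Rbar_real_le; [lra |].
  intros z [k [Hk ->]].
  replace k with (sz s * Z.of_nat (Z.to_nat (sz s * k)))%Z by (rewrite Z2Nat.id by lia; apply sz_sz).
  left. apply HN. lia.
Qed.

Lemma G_small eta : 0 < eta -> exists del, 0 < del /\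
  forall eps, 0 < eps < del -> G p pm pp eps <= eta.
Proof.
  intros eta0.
  assert (Hside : forall s, exists N : nat, forall eps, (Z.of_nat N <= RZ eps)%Z ->
            / Rmin (psig pm pp s) (1 - psig pm pp s) * Gsup p pm pp s eps <= eta).
  { intros s. pose proof (min_psig_pos s) as m0.
    destruct (Gsup_small s (eta * Rmin (psig pm pp s) (1 - psig pm pp s))) as [N HN]; [nra |].
    exists N. intros eps Heps. specialize (HN eps Heps).
    apply Rmult_le_reg_l with (Rmin (psig pm pp s) (1 - psig pm pp s)); [exact m0 |].
    rewrite <- Rmult_assoc, Rinv_r, Rmult_1_l by lra. lra. }
  destruct (Hside Minus) as [N1 H1], (Hside Plus) as [N2 H2].
  exists (exp (- (INR (Nat.max N1 N2) * ln 2))). split; [apply exp_pos |].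
  intros eps Heps. apply RZ_ge in Heps.
  unfold G. apply Rmax_lub; [apply H1 | apply H2]; lia.
Qed.

Lemma neg_ln_one_minus_G_lim :
  filterlim (fun eps => - ln (1 - G p pm pp eps)) (at_right 0) (locally 0).
Proof.
  apply filterlim_locally. intros e.
  destruct (G_small (Rmin (1 / 2) (e / 4))) as [del [del0 Hdel]].
  { apply Rmin_glb_lt; [lra | pose proof (cond_pos e); lra]. }
  exists (mkposreal _ del0). intros eps Heps eps0.
  change (Rabs (eps - 0) < del) in Heps. rewrite Rminus_0_r, Rabs_right in Heps by lra.
  specialize (Hdel eps (conj eps0 Heps)).
  pose proof (Rmin_l (1 / 2) (e / 4)). pose proof (Rmin_r (1 / 2) (e / 4)).
  pose proof (neg_ln_one_minus_le (G p pm pp eps) ltac:(pose proof (G_ge0 eps); lra)).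
  change (Rabs (- ln (1 - G p pm pp eps) - 0) < e).
  rewrite Rminus_0_r, Rabs_right by lra. pose proof (cond_pos e). lra.
Qed.

End ErrorFunction.

Lemma is_lim_seq_const_div_n c : is_lim_seq (fun n => c / INR n) 0.
Proof.
  assert (Hinv : is_lim_seq (fun n => / INR n) 0).
  { replace (Finite 0) with (Rbar_inv p_infty) by reflexivity.
    apply is_lim_seq_inv; [apply is_lim_seq_INR | discriminate]. }
  replace (Finite 0) with (Finite (c * 0)) by (f_equal; ring).
  apply is_lim_seq_mult'; [apply is_lim_seq_const | exact Hinv].
Qed.

Lemma is_lim_seq_ln_div_n : is_lim_seq (fun n => ln (INR n + 2) / INR n) 0.
Proof.
  assert (H2 : is_lim_seq (fun n => INR n + 2) p_infty).
  { apply is_lim_seq_ext with (fun n => INR (n + 2)); [intros n; rewrite plus_INR; simpl; ring |].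
    apply (is_lim_seq_incr_n INR 2 p_infty), is_lim_seq_INR. }
  assert (Hln : is_lim_seq (fun n => ln (INR n + 2) / (INR n + 2)) 0)
    by exact (filterlim_comp _ _ _ _ (fun y => ln y / y) _ _ _ H2 is_lim_div_ln_p).
  assert (Hr : is_lim_seq (fun n => 1 + 2 / INR n) 1).
  { replace (Finite 1) with (Finite (1 + 0)) by (f_equal; ring).
    apply is_lim_seq_plus'; [apply is_lim_seq_const | apply is_lim_seq_const_div_n]. }
  replace (Finite 0) with (Finite (0 * 1)) by (f_equal; ring).
  eapply is_lim_seq_ext_loc; [| apply is_lim_seq_mult'; [exact Hln | exact Hr]].
  exists 1%nat. intros n Hn. assert (0 < INR n) by (apply lt_0_INR; lia). field. lra.
Qed.

Section Rates.
Variables (u : nat -> R) (k : nat -> nat) (A : R).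
Hypothesis k_bounds : forall n, (n <= k n <= S n)%nat.

Lemma LimSup_le_rate :
  (forall n, (1 <= n)%nat -> u n <= INR (k n) * A / INR n) -> Rbar_le (LimSup_seq u) (Finite A).
Proof.
  intros Hu.
  apply Rbar_le_trans with (LimSup_seq (fun n => A + Rabs A / INR n)).
  - apply LimSup_le. exists 1%nat. intros n Hn. eapply Rle_trans; [apply Hu; lia |].
    assert (n0 : 0 < INR n) by (apply lt_0_INR; lia).
    apply Rmult_le_reg_r with (INR n); [exact n0 |].
    unfold Rdiv. rewrite Rmult_assoc, Rinv_l, Rmult_1_r by lra.
    rewrite Rmult_plus_distr_r, Rmult_assoc, Rinv_l, Rmult_1_r by lra.
    pose proof (k_bounds n) as Hk. pose proof (Rle_abs A). pose proof (Rle_abs (- A)).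
    rewrite Rabs_Ropp in *.
    destruct (Nat.eq_dec (k n) n) as [-> | Hkn]; [nra |].
    replace (k n) with (S n) by lia. rewrite S_INR. lra.
  - rewrite (is_LimSup_seq_unique _ A); [apply Rbar_le_refl |].
    apply is_lim_LimSup_seq.
    replace (Finite A) with (Finite (A + 0)) by (f_equal; ring).
    apply is_lim_seq_plus'; [apply is_lim_seq_const | apply is_lim_seq_const_div_n].
Qed.

Lemma LimInf_ge_rate B :
  (forall n, (1 <= n)%nat -> (INR (k n) * A + B - 2 * ln (INR (S (k n)))) / INR n <= u n) ->
  Rbar_le (Finite A) (LimInf_seq u).
Proof.
  intros Hu.
  apply Rbar_le_trans with (LimInf_seq (fun n => A - (Rabs A + Rabs B) / INR n - 2 * (ln (INR n + 2) / INR n))).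
  - rewrite (is_LimInf_seq_unique _ A); [apply Rbar_le_refl |].
    apply is_lim_LimInf_seq.
    replace (Finite A) with (Finite (A - 0 - 2 * 0)) by (f_equal; ring).
    apply is_lim_seq_minus'; [apply is_lim_seq_minus'; [apply is_lim_seq_const | apply is_lim_seq_const_div_n] |].
    apply is_lim_seq_mult'; [apply is_lim_seq_const | apply is_lim_seq_ln_div_n].
  - apply LimInf_le. exists 1%nat. intros n Hn. eapply Rle_trans; [| apply Hu; lia].
    assert (n0 : 0 < INR n) by (apply lt_0_INR; lia).
    pose proof (k_bounds n) as Hk.
    assert (Hln : ln (INR (S (k n))) <= ln (INR n + 2)).
    { apply ln_le; [apply lt_0_INR; lia |].
      replace (INR n + 2) with (INR (n + 2)) by (rewrite plus_INR; simpl; ring). apply le_INR; lia. }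
    apply Rmult_le_reg_r with (INR n); [exact n0 |].
    unfold Rdiv. rewrite Rmult_assoc, Rinv_l, Rmult_1_r by lra.
    replace ((A - (Rabs A + Rabs B) * / INR n - 2 * (ln (INR n + 2) * / INR n)) * INR n)
      with (A * INR n - (Rabs A + Rabs B) - 2 * ln (INR n + 2)) by (field; lra).
    pose proof (Rle_abs B). pose proof (Rle_abs (- B)). pose proof (Rle_abs A). pose proof (Rle_abs (- A)).
    rewrite Rabs_Ropp in *.
    destruct (Nat.eq_dec (k n) n) as [E | E]; [rewrite E in * | replace (k n) with (S n) in * by lia];
      rewrite ?S_INR in *; lra.
Qed.

End Rates.

Definition rate_window (u : nat -> R) (I : Rbar) (g : R) : Prop :=
  Rbar_le (Rbar_minus (Rbar_opp I) g) (LimInf_seq u) /\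
  Rbar_le (LimInf_seq u) (LimSup_seq u) /\
  Rbar_le (LimSup_seq u) (Rbar_plus (Rbar_opp I) g).

Lemma rate_window_intro u c g lo hi :
  Rbar_le (Finite lo) (LimInf_seq u) -> Rbar_le (LimSup_seq u) (Finite hi) ->
  - c - g <= lo -> hi <= - c + g -> rate_window u (Finite c) g.
Proof.
  intros Hlo Hhi Hl Hh. split; [| split; [apply LimSup_LimInf_seq_le |]].
  - eapply Rbar_le_trans; [| exact Hlo]. simpl. lra.
  - eapply Rbar_le_trans; [exact Hhi |]. simpl. lra.
Qed.

Lemma half_up_double n : (n <= (n + 1) / 2 + (n + 1) / 2 <= S n)%nat.
Proof. pose proof (Nat.div_mod (n + 1) 2). pose proof (Nat.mod_upper_bound (n + 1) 2). lia. Qed.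

Lemma mlen_pred n : (mlen n - 1 = (n + 1) / 2 + (n + 1) / 2)%nat.
Proof. unfold mlen. lia. Qed.

Lemma ln_one_plus_le t : 0 <= t < 1 -> ln (1 + t) <= - ln (1 - t).
Proof.
  intros Ht. assert (ln ((1 + t) * (1 - t)) <= 0) by (rewrite <- ln_1; apply ln_le; nra).
  rewrite ln_mult in H by lra. lra.
Qed.

Lemma div_INR_le a b n : (1 <= n)%nat -> a <= b -> a / INR n <= b / INR n.
Proof.
  intros Hn Hab. assert (0 < INR n) by (apply lt_0_INR; lia).
  apply Rmult_le_compat_r; [left; apply Rinv_0_lt_compat; lra | exact Hab].
Qed.

Lemma mlen_rates (u f : nat -> R) A B hi :
  (forall n, (1 <= n)%nat -> u n = f (mlen n - 1)%nat / INR n) ->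
  (forall j, INR (j + j) * A + B - 2 * ln (INR (S (j + j))) <= f (j + j)%nat <= INR (j + j) * hi) ->
  Rbar_le (Finite A) (LimInf_seq u) /\ Rbar_le (LimSup_seq u) (Finite hi).
Proof.
  intros Hu Hf. split.
  - apply (LimInf_ge_rate u _ A half_up_double B).
    intros n Hn. rewrite Hu, mlen_pred by exact Hn. apply div_INR_le; [exact Hn | apply Hf].
  - apply (LimSup_le_rate u _ hi half_up_double).
    intros n Hn. rewrite Hu, mlen_pred by exact Hn. apply div_INR_le; [exact Hn | apply Hf].
Qed.

Section Estimates.
Variables (p : Z -> R) (pm pp eps : R) (Rad : nat) (s : sgn).
Hypothesis p01 : forall k, 0 < p k < 1.
Hypothesis pm01 : 0 < pm < 1.
Hypothesis pp01 : 0 < pp < 1.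
Hypothesis Rad_ge : (Z.of_nat Rad >= RZ eps)%Z.
Hypothesis G_lt1 : G p pm pp eps < 1.

Let q := psig pm pp s.
Let qo := match s with Plus => q | Minus => 1 - q end.
Let Gv := G p pm pp eps.
Let L := ln (4 * q * (1 - q)) / 2.
Let P := p_out p s Rad.

Lemma q01 : 0 < q < 1.
Proof. apply psig01; assumption. Qed.

Lemma qo01 : 0 < qo < 1.
Proof. pose proof q01. unfold qo; destruct s; lra. Qed.

Lemma qo_var : 4 * qo * (1 - qo) = 4 * q * (1 - q).
Proof. unfold qo; destruct s; ring. Qed.

Lemma Gv_ge0 : 0 <= Gv.
Proof. apply G_ge0; assumption. Qed.

Lemma Gv_lt1 : Gv < 1.
Proof. exact G_lt1. Qed.

Lemma P01 y : 0 <= P y <= 1.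
Proof. unfold P, p_out. pose proof (p01 (pos_of_depth s Rad y)). destruct s; lra. Qed.

Lemma P_near y : (0 <= y)%Z ->
  qo * (1 - Gv) <= P y <= qo * (1 + Gv) /\ (1 - qo) * (1 - Gv) <= 1 - P y <= (1 - qo) * (1 + Gv).
Proof.
  intros Hy.
  assert (Hk : (sz s * pos_of_depth s Rad y >= RZ eps)%Z) by (unfold pos_of_depth; rewrite sz_sz; lia).
  pose proof (dist_psig_le_G p pm pp p01 pm01 pp01 s eps _ Hk) as H. fold q Gv in H.
  apply Rabs_le_between in H.
  pose proof Gv_ge0. pose proof q01.
  pose proof (Rmin_l q (1 - q)). pose proof (Rmin_r q (1 - q)).
  set (m := Rmin q (1 - q)) in *.
  assert (Gv * m <= Gv * q) by (apply Rmult_le_compat_l; lra).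
  assert (Gv * m <= Gv * (1 - q)) by (apply Rmult_le_compat_l; lra).
  unfold P, qo, p_out. destruct s; split; split; nra.
Qed.

Lemma killed_le_growth b :
  (forall y, b y <= exp ((ln (1 - qo) - ln qo) / 2 * IZR y)) ->
  forall k, killed_mean P b k 0 <= ((1 + Gv) * exp L) ^ k.
Proof.
  intros Hb k. pose proof qo01. pose proof Gv_ge0.
  eapply Rle_trans; [apply killed_mean_le_exp with (K := (1 + Gv) * exp L); [apply P01 | | | exact Hb] |].
  - intros y Hy. destruct (P_near y Hy) as [[? ?] [? ?]].
    pose proof (exp_pos ((ln (1 - qo) - ln qo) / 2)). pose proof (exp_pos (- ((ln (1 - qo) - ln qo) / 2))).
    apply Rle_trans with ((1 + Gv) * (qo * exp ((ln (1 - qo) - ln qo) / 2) +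
                                      (1 - qo) * exp (- ((ln (1 - qo) - ln qo) / 2)))); [nra |].
    rewrite exp_tilt_balance, qo_var by lra. unfold L. lra.
  - pose proof (exp_pos L). nra.
  - simpl IZR. rewrite Rmult_0_r, exp_0, Rmult_1_r. lra.
Qed.

Lemma exc_le_growth k : killed_mean P ind_zero k 0 <= ((1 + Gv) * exp L) ^ k.
Proof.
  apply killed_le_growth. intros y. unfold ind_zero, ind. destruct (Z.eqb_spec y 0) as [-> | _].
  - rewrite Rmult_0_r, exp_0. lra.
  - left; apply exp_pos.
Qed.

(* Inward drift: the tilt [lam >= 0] dominates the indicator of [y >= 0]. *)
Lemma mea_le_growth k : qo <= 1 / 2 -> killed_mean P ind_nonneg k 0 <= ((1 + Gv) * exp L) ^ k.
Proof.
  intros Hqo. pose proof qo01. apply killed_le_growth.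
  assert (lam0 : 0 <= (ln (1 - qo) - ln qo) / 2) by (assert (ln qo <= ln (1 - qo)) by (apply ln_le; lra); lra).
  intros y. unfold ind_nonneg, ind. destruct (Z.leb_spec 0 y).
  - pose proof (exp_ineq1_le ((ln (1 - qo) - ln qo) / 2 * IZR y)).
    assert (0 <= (ln (1 - qo) - ln qo) / 2 * IZR y) by (apply Rmult_le_pos; [lra | apply IZR_le; lia]). lra.
  - left; apply exp_pos.
Qed.

Lemma mea_le_1 k : killed_mean P ind_nonneg k 0 <= 1.
Proof.
  eapply Rle_trans; [apply killed_mean_le_exp with (lam := 0) (K := 1); [apply P01 | | lra |] |].
  - intros y _. pose proof (P01 y). rewrite Ropp_0, exp_0. lra.
  - intros y. rewrite Rmult_0_l, exp_0. unfold ind_nonneg, ind. destruct (0 <=? y)%Z; lra.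
  - rewrite pow1, Rmult_0_l, exp_0. lra.
Qed.

Lemma killed_ge_const b : (forall y, 0 <= b y) ->
  forall k, (1 - Gv) ^ k * killed_mean (fun _ => qo) b k 0 <= killed_mean P b k 0.
Proof.
  intros Hb k. pose proof qo01. pose proof Gv_lt1.
  apply killed_mean_ge_const; [apply P01 | lra | exact Hb | lra |].
  intros y Hy. destruct (P_near y Hy) as [[? ?] [? ?]]. split; nra.
Qed.

Lemma exc_ge_ballot j :
  (1 - Gv) ^ (j + j) * ((4 * q * (1 - q)) ^ j / INR (S (j + j)) ^ 2) <= killed_mean P ind_zero (j + j) 0.
Proof.
  pose proof Gv_lt1.
  eapply Rle_trans; [| apply killed_ge_const, ind_zero_ge0].
  apply Rmult_le_compat_l; [apply pow_le; lra |].
  replace 0%Z with (Z.of_nat j - Z.of_nat j)%Z by lia.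
  rewrite killed_const_zero_ballot, <- qo_var by lia.
  apply ballot_diag_ge. pose proof qo01. lra.
Qed.

Lemma mea_ge_ruin k : 1 / 2 < qo -> (1 - Gv) ^ k * (1 - (1 - qo) / qo) <= killed_mean P ind_nonneg k 0.
Proof.
  intros Hqo. pose proof Gv_lt1.
  eapply Rle_trans; [| apply killed_ge_const, ind_nonneg_ge0].
  apply Rmult_le_compat_l; [apply pow_le; lra |].
  pose proof (killed_const_nonneg_ge qo ltac:(pose proof qo01; lra) k 0) as Hruin.
  rewrite pow_1 in Hruin. exact Hruin.
Qed.

Lemma exc_le_mea k : killed_mean P ind_zero k 0 <= killed_mean P ind_nonneg k 0.
Proof. apply killed_mean_le_compat; [apply P01 | apply ind_zero_le_ind_nonneg]. Qed.

Lemma ln_growth k : ln (((1 + Gv) * exp L) ^ k) = INR k * (ln (1 + Gv) + L).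
Proof.
  pose proof Gv_ge0. pose proof (exp_pos L).
  rewrite ln_pow, ln_mult, ln_exp by nra. reflexivity.
Qed.

Lemma ln_ballot_bound j :
  0 < (1 - Gv) ^ (j + j) * ((4 * q * (1 - q)) ^ j / INR (S (j + j)) ^ 2) /\
  ln ((1 - Gv) ^ (j + j) * ((4 * q * (1 - q)) ^ j / INR (S (j + j)) ^ 2)) =
  INR (j + j) * (ln (1 - Gv) + L) - 2 * ln (INR (S (j + j))).
Proof.
  pose proof Gv_lt1. pose proof q01.
  assert (V0 : 0 < 4 * q * (1 - q)) by nra.
  assert (N0 : 0 < INR (S (j + j))) by (apply lt_0_INR; lia).
  assert (A0 : 0 < (1 - Gv) ^ (j + j)) by (apply pow_lt; lra).
  assert (B0 : 0 < (4 * q * (1 - q)) ^ j / INR (S (j + j)) ^ 2)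
    by (apply Rdiv_lt_0_compat; apply pow_lt; lra).
  split; [nra |].
  unfold Rdiv. rewrite ln_mult, ln_mult, ln_Rinv, !ln_pow by (try apply Rinv_0_lt_compat; try apply pow_lt; lra).
  unfold L. rewrite plus_INR. replace (INR 2) with 2 by (simpl; ring). field.
Qed.

Lemma ln_exc_bounds j :
  INR (j + j) * (ln (1 - Gv) + L) + 0 - 2 * ln (INR (S (j + j))) <= ln (killed_mean P ind_zero (j + j) 0)
  <= INR (j + j) * (ln (1 + Gv) + L).
Proof.
  destruct (ln_ballot_bound j) as [B0 Bln]. pose proof (exc_ge_ballot j).
  split.
  - rewrite Rplus_0_r, <- Bln. apply ln_le; assumption.
  - rewrite <- ln_growth. apply ln_le; [lra | apply exc_le_growth].
Qed.

Lemma ln_mea_bounds_inward j : qo <= 1 / 2 ->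
  INR (j + j) * (ln (1 - Gv) + L) + 0 - 2 * ln (INR (S (j + j))) <= ln (killed_mean P ind_nonneg (j + j) 0)
  <= INR (j + j) * (ln (1 + Gv) + L).
Proof.
  intros Hqo. destruct (ln_ballot_bound j) as [B0 Bln].
  pose proof (exc_ge_ballot j). pose proof (exc_le_mea (j + j)).
  split.
  - rewrite Rplus_0_r, <- Bln. apply ln_le; lra.
  - rewrite <- ln_growth. apply ln_le; [lra | apply mea_le_growth, Hqo].
Qed.

Lemma ln_mea_bounds_outward j : 1 / 2 < qo ->
  INR (j + j) * ln (1 - Gv) + ln (1 - (1 - qo) / qo) - 2 * ln (INR (S (j + j)))
  <= ln (killed_mean P ind_nonneg (j + j) 0) <= INR (j + j) * 0.
Proof.
  intros Hqo. pose proof Gv_lt1. pose proof qo01.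
  assert (A0 : 0 < (1 - Gv) ^ (j + j)) by (apply pow_lt; lra).
  assert (R0 : 0 < 1 - (1 - qo) / qo).
  { assert ((1 - qo) / qo < 1) by (apply Rmult_lt_reg_r with qo; [lra |]; field_simplify; lra). lra. }
  assert (N0 : 0 <= ln (INR (S (j + j)))) by (rewrite <- ln_1; apply ln_le; [lra | apply (le_INR 1); lia]).
  pose proof (mea_ge_ruin (j + j) Hqo).
  split.
  - apply Rle_trans with (ln ((1 - Gv) ^ (j + j) * (1 - (1 - qo) / qo))).
    + rewrite ln_mult, ln_pow by lra. lra.
    + apply ln_le; [nra | assumption].
  - rewrite Rmult_0_r, <- ln_1. apply ln_le; [nra | apply mea_le_1].
Qed.

Lemma ICr_inf_inward : qo <= 1 / 2 -> ICr_inf q s = Finite (- L).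
Proof.
  intros Hqo. pose proof q01. unfold ICr_inf. apply Glb_Rbar_min.
  - exists 0. split; [rewrite Rmult_0_r; lra | rewrite ICr_0 by lra; reflexivity].
  - intros y [x [Hx HI]].
    pose proof (ICr_ge_legendre q x y ((ln (1 - q) - ln q) / 2) H HI) as Hy.
    rewrite exp_tilt_balance, ln_exp in Hy by lra. fold L in Hy.
    assert (0 <= (ln (1 - q) - ln q) / 2 * x).
    { unfold qo in Hqo. destruct s; unfold sR, sz in Hx; simpl IZR in Hx.
      - assert (ln (1 - q) <= ln q) by (apply ln_le; lra). nra.
      - assert (ln q <= ln (1 - q)) by (apply ln_le; lra). nra. }
    lra.
Qed.

Lemma ICr_inf_outward : 1 / 2 < qo -> ICr_inf q s = Finite 0.
Proof.
  intros Hqo. pose proof q01. unfold ICr_inf. apply Glb_Rbar_min.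
  - exists (2 * q - 1). split; [| apply ICr_mean; lra].
    unfold qo in Hqo. destruct s; unfold sR, sz; simpl IZR; lra.
  - intros y [x [_ HI]].
    pose proof (ICr_ge_legendre q x y 0 H HI) as Hy.
    rewrite Ropp_0, exp_0, !Rmult_1_r, Rmult_0_l in Hy.
    replace (q + (1 - q)) with 1 in Hy by ring. rewrite ln_1 in Hy. lra.
Qed.

Lemma exc_window :
  rate_window (fun n => ln (Pw p (sz s * Z.of_nat Rad) (mlen n) (Omega_exc s Rad (mlen n))) / INR n)
    (ICr q 0) (- ln (1 - Gv)).
Proof.
  pose proof q01. pose proof (ln_one_plus_le Gv (conj Gv_ge0 Gv_lt1)).
  assert (Hu : forall n, (1 <= n)%nat ->
    ln (Pw p (sz s * Z.of_nat Rad) (mlen n) (Omega_exc s Rad (mlen n))) / INR n =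
    ln (killed_mean P ind_zero (mlen n - 1) 0) / INR n)
    by (intros n Hn; rewrite Pw_exc_killed by (unfold mlen; lia); reflexivity).
  destruct (mlen_rates _ (fun k => ln (killed_mean P ind_zero k 0)) _ 0 _ Hu ln_exc_bounds) as [Hlo Hhi].
  rewrite ICr_0 by lra. eapply rate_window_intro; [exact Hlo | exact Hhi | |]; fold L; lra.
Qed.

Lemma mea_window :
  rate_window (fun n => ln (Pw p (sz s * Z.of_nat Rad) (mlen n) (Omega_mea s Rad (mlen n))) / INR n)
    (ICr_inf q s) (- ln (1 - Gv)).
Proof.
  pose proof (ln_one_plus_le Gv (conj Gv_ge0 Gv_lt1)).
  assert (Hu : forall n, (1 <= n)%nat ->
    ln (Pw p (sz s * Z.of_nat Rad) (mlen n) (Omega_mea s Rad (mlen n))) / INR n =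
    ln (killed_mean P ind_nonneg (mlen n - 1) 0) / INR n)
    by (intros n Hn; rewrite Pw_mea_killed by (unfold mlen; lia); reflexivity).
  destruct (Rle_lt_dec qo (1 / 2)) as [Hqo | Hqo].
  - destruct (mlen_rates _ (fun k => ln (killed_mean P ind_nonneg k 0)) _ 0 _ Hu
               (fun j => ln_mea_bounds_inward j Hqo))
      as [Hlo Hhi].
    rewrite ICr_inf_inward by exact Hqo. eapply rate_window_intro; [exact Hlo | exact Hhi | |]; lra.
  - destruct (mlen_rates _ (fun k => ln (killed_mean P ind_nonneg k 0)) _ _ _ Hu
               (fun j => ln_mea_bounds_outward j Hqo))
      as [Hlo Hhi].
    assert (ln (1 - Gv) <= 0) by (rewrite <- ln_1; apply ln_le; pose proof Gv_ge0; pose proof Gv_lt1; lra).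
    rewrite ICr_inf_outward by exact Hqo. eapply rate_window_intro; [exact Hlo | exact Hhi | |]; lra.
Qed.

End Estimates.

Theorem proposition3p5 :
  forall (p : Z -> R) (pm pp : R),
    (forall k, 0 < p k < 1) ->
    0 < pm < 1 -> 0 < pp < 1 ->
    is_lim_seq (fun n : nat => p (- Z.of_nat n)%Z) pm ->
    is_lim_seq (fun n : nat => p (Z.of_nat n)) pp ->
  forall epsstar : R, 0 < epsstar ->
    (forall eps, 0 < eps < epsstar -> G p pm pp eps < 1) ->
  exists g : R -> R,
    filterlim g (at_right 0) (locally 0) /\
    forall (eps : R) (Rad : nat),
      0 < eps < epsstar ->
      (Z.of_nat Rad >= RZ eps)%Z ->
      forall s : sgn,
        let exc := fun n : nat =>
          ln (Pw p (sz s * Z.of_nat Rad) (mlen n) (Omega_exc s Rad (mlen n))) / INR n in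
        let mea := fun n : nat =>
          ln (Pw p (sz s * Z.of_nat Rad) (mlen n) (Omega_mea s Rad (mlen n))) / INR n in
        Rbar_le (Rbar_minus (Rbar_opp (ICr (psig pm pp s) 0)) (g eps)) (LimInf_seq exc) /\
        Rbar_le (LimInf_seq exc) (LimSup_seq exc) /\
        Rbar_le (LimSup_seq exc) (Rbar_plus (Rbar_opp (ICr (psig pm pp s) 0)) (g eps)) /\
        Rbar_le (Rbar_minus (Rbar_opp (ICr_inf (psig pm pp s) s)) (g eps)) (LimInf_seq mea) /\
        Rbar_le (LimInf_seq mea) (LimSup_seq mea) /\
        Rbar_le (LimSup_seq mea) (Rbar_plus (Rbar_opp (ICr_inf (psig pm pp s) s)) (g eps)).
Proof.
  intros p pm pp p01 pm01 pp01 pm_lim pp_lim epsstar _ G_lt1.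
  exists (fun eps => - ln (1 - G p pm pp eps)). split.
  - exact (neg_ln_one_minus_G_lim p pm pp p01 pm01 pp01 pm_lim pp_lim).
  - intros eps Rad Heps Rad_ge s exc mea.
    destruct (exc_window p pm pp eps Rad s p01 pm01 pp01 Rad_ge (G_lt1 eps Heps)) as (? & ? & ?).
    destruct (mea_window p pm pp eps Rad s p01 pm01 pp01 Rad_ge (G_lt1 eps Heps)) as (? & ? & ?).
    repeat split; assumption.
Qed.
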